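(* Let $A$ be a torsion-free $\mathbb{Z}_{(p)}$-algebra and $F$ a formal group law over $A$. Then $F$ is $p^n$-typical if and only if its logarithm has the form $\sum_{i\ge0}l_ix^{p^{ni}}$ with $l_i\in A\otimes\mathbb{Q}$.
   Context: A formal group law $F$ over a $\mathbb{Z}_{(p)}$-algebra is $p$-typical in the sense of Cartier (over a torsion-free $\mathbb{Z}_{(p)}$-algebra, this is equivalent to its logarithm having the form $\sum_{i\ge0}l_ix^{p^i}$). A power series in $x$ is $p^n$-gradable if it has the form $\sum_{j\ge0}a_jx^{1+j(p^n-1)}$. $F$ is $p^n$-typical if it is $p$-typical and the series $[p]_F(x)$ ($p$-fold formal sum of $x$) is $p^n$-gradable. *)

From HB Require Import structures.
From mathcomp Require Import all_boot all_order all_algebra.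
From mathcomp Require Import mpoly.
Set Implicit Arguments. Unset Strict Implicit. Unset Printing Implicit Defensive.
Import GRing.Theory.
Local Open Scope ring_scope.

Definition pseries (k : nat) (R : Type) := 'X_{1..k} -> R.

Definition ptrunc (R : nzRingType) k (N : nat) (f : pseries k R) : {mpoly R[k]} :=
  \sum_(m : 'X_{1..k < N.+1}) f m *: 'X_[bmnm m].

Definition pvar (R : nzRingType) k (i : 'I_k) : pseries k R :=
  fun m => (m == U_(i)%MM)%:R.

Definition pzero (R : nzRingType) k : pseries k R := fun _ => 0.

Arguments pzero R k : clear implicits.
Arguments pvar R {k} i.

Definition padd (R : nzRingType) k (f g : pseries k R) : pseries k R :=
  fun m => f m + g m.

(* substitution f(g_0, ..., g_{j-1}) of series g_i in k variables (with   *)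
(* zero constant term) into a series f in j variables.  The coefficient    *)
(* of a monomial m of degree N only depends on the truncations at degree N. *)
Definition pcomp (R : nzRingType) j k (f : pseries j R) (g : 'I_j -> pseries k R)
  : pseries k R :=
  fun m => (comp_mpoly [tuple ptrunc (mdeg m) (g i) | i < j]
                       (ptrunc (mdeg m) f)) @_ m.

Definition pair2 (T : Type) (a b : T) : 'I_2 -> T :=
  fun i => if val i == 0%N then a else b.

Definition pmap (R S : Type) k (phi : R -> S) (f : pseries k R) : pseries k S :=
  fun m => phi (f m).

Definition is_fgl (R : nzRingType) (F : pseries 2 R) : Prop :=
  [/\
      pcomp F (pair2 (pvar R ord0) (pzero R 1)) = pvar R ord0,
      pcomp F (pair2 (pzero R 1) (pvar R ord0)) = pvar R ord0,
      pcomp F (pair2 (pvar R (@Ordinal 2 1 isT)) (pvar R (@Ordinal 2 0 isT))) = F &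
      pcomp F (pair2 (pcomp F (pair2 (pvar R (@Ordinal 3 0 isT)) (pvar R (@Ordinal 3 1 isT))))
                     (pvar R (@Ordinal 3 2 isT)))
      = pcomp F (pair2 (pvar R (@Ordinal 3 0 isT))
                     (pcomp F (pair2 (pvar R (@Ordinal 3 1 isT)) (pvar R (@Ordinal 3 2 isT)))))].

Fixpoint fgl_mul (R : nzRingType) (F : pseries 2 R) (m : nat) : pseries 1 R :=
  match m with
  | 0%N => pzero R 1
  | m'.+1 => pcomp F (pair2 (pvar R ord0) (fgl_mul F m'))
  end.

Definition torsion_free (A : nzRingType) : Prop :=
  forall (k : nat) (a : A), a *+ k = 0 -> k = 0%N \/ a = 0.

Definition Zp_local_algebra (p : nat) (A : unitRingType) : Prop :=
  forall k : nat, coprime k p -> (k%:R : A) \is a GRing.unit.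

(* iota : A -> K exhibits K as A (x) Q: K is a Q-algebra, iota is      *)
(* injective, and every element of K is iota(a)/k for some a, k > 0.    *)
Definition is_rationalization (A K : comUnitRingType) (iota : A -> K) : Prop :=
  [/\ forall k : nat, (0 < k)%N -> (k%:R : K) \is a GRing.unit,
      injective iota &
      forall x : K, exists (a : A) (k : nat), (0 < k)%N /\ x * k%:R = iota a].

Definition is_fgl_log (A K : comUnitRingType) (iota : A -> K)
    (F : pseries 2 A) (l : pseries 1 K) : Prop :=
  [/\ l 0%MM = 0, l (U_(ord0))%MM = 1 &
      pcomp l (fun _ => pmap iota F)
      = padd (pcomp l (fun _ => pvar K (@Ordinal 2 0 isT)))
             (pcomp l (fun _ => pvar K (@Ordinal 2 1 isT)))].

Definition supported_in (R : nzRingType) (f : pseries 1 R) (P : nat -> Prop) :=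
  forall m : 'X_{1..1}, f m != 0 -> P (mdeg m).

Definition pn_gradable (R : nzRingType) (p n : nat) (f : pseries 1 R) : Prop :=
  supported_in f (fun d => exists j : nat, d = (1 + j * (p ^ n - 1))%N).

Definition p_typical (A K : comUnitRingType) (iota : A -> K) (p : nat)
    (F : pseries 2 A) : Prop :=
  forall l : pseries 1 K, is_fgl_log iota F l ->
    supported_in l (fun d => exists i : nat, d = (p ^ i)%N).

Definition pn_typical (A K : comUnitRingType) (iota : A -> K) (p n : nat)
    (F : pseries 2 A) : Prop :=
  p_typical iota p F /\ pn_gradable p n (fgl_mul F p).

(* Let f = [p]_F, mapped into K, so that the logarithm satisfies l (f x) = p l x.
   Comparing coefficients of x^d gives (p^d - p) l_d = - sum_(e < d) l_e [x^d] f^e,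
   where p^d - p is invertible for d > 1.  Hence the logarithm is unique, and for
   every modulus M an induction on d shows that l is supported in degrees
   congruent to 1 mod M iff f is: a power f^e with e = 1 mod M only reaches
   degrees congruent to 1.  For M = p^n - 1 the condition on f is p^n-gradability,
   and a power p^k is congruent to 1 mod p^n - 1 iff n divides k. *)

From HB Require Import structures.
From mathcomp Require Import all_boot all_order all_algebra.
From mathcomp Require Import mpoly.
From mathcomp Require Import zify.
(* Imported last so that [pmap] is the coefficientwise map, not [seq.pmap]. *)
Set Implicit Arguments. Unset Strict Implicit. Unset Printing Implicit Defensive.
Import GRing.Theory.

Lemma expnM_mod_pred p n i : (0 < p)%N -> p ^ (n * i) = 1 %[mod p ^ n - 1].
Proof.
move=> p_gt0; set M := (p ^ n - 1)%N.
have pnE : p ^ n = (M + 1)%N by rewrite /M subnK // expn_gt0 p_gt0.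
by rewrite expnM -modnXm pnE modnDl modnXm exp1n.
Qed.

Lemma expn_mod_pred_eq1 p n k : (1 < p)%N -> (p ^ k == 1 %[mod p ^ n - 1]) = (n %| k).
Proof.
move=> p_gt1; apply/idP/idP; last first.
  by case/dvdnP=> i ->; rewrite mulnC expnM_mod_pred // ltnW.
apply: contraLR; case: n => [|n] ndvd.
  rewrite dvd0n in ndvd; rewrite expn0 subnn !modn0 eq_sym neq_ltn.
  by rewrite -{1}(expn0 p) ltn_exp2l // lt0n ndvd.
set r := (k %% n.+1)%N.
have r_gt0 : (0 < r)%N by rewrite lt0n -/(dvdn _ _) ndvd.
have r_lt : (r < n.+1)%N by rewrite ltn_mod.
have kE : p ^ k = p ^ r %[mod p ^ n.+1 - 1].
  rewrite {1}(divn_eq k n.+1) expnD (mulnC (k %/ n.+1)) -modnMml expnM_mod_pred.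
    by rewrite modnMml mul1n.
  exact: ltnW.
rewrite kE.
have pr_le : (p ^ r <= p ^ n)%N by rewrite leq_exp2l //; lia.
have p_le : (p <= p ^ n)%N by rewrite -{1}(expn1 p) leq_exp2l //; lia.
have pr_gt1 : (1 < p ^ r)%N by rewrite -{1}(expn0 p) ltn_exp2l.
rewrite expnS !modn_small; nia.
Qed.

Lemma expn_cong1P p n d : (1 < p)%N ->
  ((exists k, d = p ^ k) /\ d = 1 %[mod p ^ n - 1]) <-> exists i, d = p ^ (n * i).
Proof.
move=> p_gt1; split=> [[[k ->]] /eqP|[i ->]].
  by rewrite expn_mod_pred_eq1 // => /dvdnP[i ->]; exists i; rewrite mulnC.
by split; [exists (n * i)%N | apply: expnM_mod_pred; lia].
Qed.

Lemma modn_eq1P d M : (0 < d)%N -> d = 1 %[mod M] <-> exists j, d = (1 + j * M)%N.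
Proof.
move=> d_gt0; split=> [dM|[j ->]]; last by rewrite addnC modnMDl.
exists ((d - 1) %/ M); have /eqP : (d - 1 + 1) %% M = (0 + 1) %% M by rewrite subnK.
rewrite eqn_modDr mod0n => /eqP dvd; have := divn_eq (d - 1) M; rewrite dvd; lia.
Qed.

Local Open Scope ring_scope.

Definition cong1_supported (R : nzRingType) (M : nat) (f : pseries 1 R) : Prop :=
  supported_in f (fun d => d = 1 %[mod M]).

Lemma supported_in_iff (R : nzRingType) (f : pseries 1 R) (P Q : nat -> Prop) :
  f 0%MM = 0 -> (forall d, (0 < d)%N -> P d <-> Q d) ->
  supported_in f P <-> supported_in f Q.
Proof.
move=> f0 PQ; have deg_gt0 m : f m != 0 -> (0 < mdeg m)%N.
  by rewrite lt0n mdeg_eq0; apply: contra => /eqP ->; rewrite f0.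
by split=> supp m fm; have [PQm QPm] := PQ _ (deg_gt0 m fm); auto.
Qed.

Lemma supported_inI (R : nzRingType) (f : pseries 1 R) (P Q : nat -> Prop) :
  supported_in f P /\ supported_in f Q <-> supported_in f (fun d => P d /\ Q d).
Proof.
by split=> [[fP fQ] m fm|fPQ]; [split; [exact: fP|exact: fQ] | split=> m /fPQ[]].
Qed.

Lemma supported_in_pmap (R S : nzRingType) (phi : {additive R -> S}) (f : pseries 1 R)
    (P : nat -> Prop) :
  injective (phi : R -> S) -> supported_in (pmap phi f) P <-> supported_in f P.
Proof.
move=> phi_inj; have fE m : (pmap phi f m != 0) = (f m != 0).
  by rewrite /pmap -(raddf0 phi) (inj_eq phi_inj).
by split=> supp m fm; apply: supp; move: fm; rewrite fE.
Qed.

Section LowDegree.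
Variables (R : comNzRingType) (k : nat).
Implicit Types (P Q : {mpoly R[k]}).

Definition vanish_below (a : nat) P := forall m : 'X_{1..k}, (mdeg m < a)%N -> P@_m = 0.

Lemma vanish_below0 a : vanish_below a 0.
Proof. by move=> m _; rewrite mcoeff0. Qed.

Lemma vanish_belowD a P Q : vanish_below a P -> vanish_below a Q -> vanish_below a (P + Q).
Proof. by move=> hP hQ m hm; rewrite mcoeffD hP // hQ // addr0. Qed.

Lemma vanish_belowZ a c P : vanish_below a P -> vanish_below a (c *: P).
Proof. by move=> hP m hm; rewrite mcoeffZ hP // mulr0. Qed.

Lemma vanish_below_sum a (I : Type) (r : seq I) (F : I -> {mpoly R[k]}) :
  (forall i, vanish_below a (F i)) -> vanish_below a (\sum_(i <- r) F i).
Proof.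
by move=> h; elim/big_ind: _ => //; [exact: vanish_below0 | move=> P Q; exact: vanish_belowD].
Qed.

Lemma vanish_belowW a b P : (b <= a)%N -> vanish_below a P -> vanish_below b P.
Proof. by move=> ba hP m hm; apply: hP; apply: leq_trans hm ba. Qed.

Lemma vanish_belowM a b P Q :
  vanish_below a P -> vanish_below b Q -> vanish_below (a + b) (P * Q).
Proof.
move=> hP hQ m hm; rewrite mcoeffM big1 // => -[m1 m2] /= /eqP mE.
have {}hm : (mdeg m1 + mdeg m2 < a + b)%N by rewrite -mdegD -mE.
have [m1_lt|m1_ge] := ltnP (mdeg m1) a; first by rewrite hP // mul0r.
by rewrite hQ ?mulr0 //; lia.
Qed.

Lemma vanish_belowMl a P Q : vanish_below a P -> vanish_below a (P * Q).
Proof. by move=> hP; rewrite -[a]addn0; apply: vanish_belowM => // m; rewrite ltn0. Qed.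

Lemma vanish_belowMr a P Q : vanish_below a Q -> vanish_below a (P * Q).
Proof. by move=> hQ; rewrite mulrC; apply: vanish_belowMl. Qed.

Lemma vanish_belowX a P e : vanish_below a P -> vanish_below (a * e) (P ^+ e).
Proof.
move=> hP; elim: e => [|e IH]; first by rewrite muln0 => m; rewrite ltn0.
by rewrite exprS mulnS; apply: vanish_belowM.
Qed.

Lemma vanish_below_prod (I : finType) (a : I -> nat) (F : I -> {mpoly R[k]}) :
  (forall i, vanish_below (a i) (F i)) -> vanish_below (\sum_i a i) (\prod_i F i).
Proof.
move=> h; apply: (big_ind2 (fun x y => vanish_below x y)) => //.
by move=> x1 x2 y1 y2; apply: vanish_belowM.
Qed.

Lemma vanish_below_subXX a P Q e :
  vanish_below 1 P -> vanish_below 1 Q -> vanish_below a (P - Q) ->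
  vanish_below (a + e.-1) (P ^+ e - Q ^+ e).
Proof.
move=> hP hQ hPQ; rewrite subrXX; apply: vanish_belowM => //.
apply: vanish_below_sum => i; apply: (@vanish_belowW (1 * (e.-1 - i) + 1 * i)%N).
  by have := ltn_ord i; lia.
by apply: vanish_belowM; apply: vanish_belowX.
Qed.

Definition agree N P Q := vanish_below N.+1 (P - Q).

Lemma agree_coef N P Q m : agree N P Q -> (mdeg m <= N)%N -> P@_m = Q@_m.
Proof. by move=> h hm; apply/eqP; rewrite -subr_eq0 -mcoeffB; apply/eqP/h. Qed.

Lemma agreeP N P Q : (forall m, (mdeg m <= N)%N -> P@_m = Q@_m) -> agree N P Q.
Proof. by move=> h m hm; rewrite mcoeffB h // subrr. Qed.

Lemma agree_refl N P : agree N P P.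
Proof. exact: agreeP. Qed.

Lemma agree_trans N P Q S : agree N P Q -> agree N Q S -> agree N P S.
Proof.
by move=> h1 h2; apply: agreeP => m hm; rewrite (agree_coef h1) ?(agree_coef h2).
Qed.

Lemma agreeD N P Q P' Q' : agree N P Q -> agree N P' Q' -> agree N (P + P') (Q + Q').
Proof. by move=> h1 h2; rewrite /agree opprD addrACA; apply: vanish_belowD. Qed.

Lemma agreeM N P Q P' Q' : agree N P Q -> agree N P' Q' -> agree N (P * P') (Q * Q').
Proof.
move=> h1 h2; rewrite /agree (_ : _ - _ = (P - Q) * P' + Q * (P' - Q')).
  by apply: vanish_belowD; [apply: vanish_belowMl | apply: vanish_belowMr].
by rewrite mulrBl mulrBr addrA subrK.
Qed.

Lemma agreeZ N c P Q : agree N P Q -> agree N (c *: P) (c *: Q).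
Proof. by move=> h; rewrite /agree -scalerBr; apply: vanish_belowZ. Qed.

Lemma agreeX N P Q e : agree N P Q -> agree N (P ^+ e) (Q ^+ e).
Proof.
move=> h; elim: e => [|e IH]; first by rewrite !expr0; apply: agree_refl.
by rewrite !exprS; apply: agreeM.
Qed.

Lemma agree_sum N (I : Type) (r : seq I) (F G : I -> {mpoly R[k]}) :
  (forall i, agree N (F i) (G i)) -> agree N (\sum_(i <- r) F i) (\sum_(i <- r) G i).
Proof.
move=> h; apply: (big_ind2 (fun x y => agree N x y)) => //; first exact: agree_refl.
by move=> x1 x2 y1 y2; apply: agreeD.
Qed.

Lemma agree_prod N (I : finType) (F G : I -> {mpoly R[k]}) :
  (forall i, agree N (F i) (G i)) -> agree N (\prod_i F i) (\prod_i G i).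
Proof.
move=> h; apply: (big_ind2 (fun x y => agree N x y)) => //; first exact: agree_refl.
by move=> x1 x2 y1 y2; apply: agreeM.
Qed.

Definition deg_cong (M r : nat) P := forall m, P@_m != 0 -> mdeg m = r %[mod M].

Lemma deg_congM M r s P Q : deg_cong M r P -> deg_cong M s Q -> deg_cong M (r + s) (P * Q).
Proof.
move=> hP hQ m nz; apply/eqP; apply: contraNT nz => /eqP mM; apply/eqP.
rewrite mcoeffM big1 // => -[m1 m2] /= /eqP mE.
have [P0|/hP m1M] := eqVneq P@_m1 0; first by rewrite P0 mul0r.
have [Q0|/hQ m2M] := eqVneq Q@_m2 0; first by rewrite Q0 mulr0.
by case: mM; rewrite mE mdegD -modnDm m1M m2M modnDm.
Qed.

Lemma deg_cong1 M : deg_cong M 0 1.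
Proof.
by move=> m; rewrite mcoeff1; case: (boolP (m == 0%MM)) => [/eqP ->|_]; rewrite ?mdeg0 ?eqxx.
Qed.

Lemma deg_congX M r P e : deg_cong M r P -> deg_cong M (r * e) (P ^+ e).
Proof.
move=> h; elim: e => [|e IH]; first by rewrite muln0; apply: deg_cong1.
by rewrite exprS mulnS; apply: deg_congM.
Qed.

Lemma deg_cong1_pow_coef M P e m :
  deg_cong M 1 P -> e = 1 %[mod M] -> mdeg m != 1 %[mod M] -> (P ^+ e)@_m = 0.
Proof.
move=> hP eM; apply: contraNeq => /(deg_congX (e := e) hP) ->.
by rewrite mul1n eM.
Qed.

End LowDegree.

Section Truncation.
Variable R : comNzRingType.

Lemma mcoeff_ptrunc k N (f : pseries k R) m :
  (ptrunc N f)@_m = if (mdeg m <= N)%N then f m else 0.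
Proof.
rewrite /ptrunc raddf_sum /=.
under eq_bigr => i _ do rewrite mcoeffZ mcoeffX.
case: ifP => hm.
  rewrite (bigD1 (BMultinom (hm : mdeg m < N.+1)%N)) //= eqxx mulr1 big1 ?addr0 // => i im.
  suff /negbTE -> : bmnm i != m by rewrite mulr0.
  by apply: contra im => /eqP iE; apply/eqP/val_inj.
rewrite big1 // => i _; case: eqP => [iE|]; last by rewrite mulr0.
by have := bmdeg i; rewrite iE ltnS hm.
Qed.

Lemma ptrunc0 k (f : pseries k R) : ptrunc 0 f = (f 0%MM)%:MP.
Proof.
apply/mpolyP => m; rewrite mcoeff_ptrunc mcoeffC leqn0 mdeg_eq0.
by case: eqP => [->|]; rewrite ?mulr1 ?mulr0.
Qed.

Lemma ptruncD k N (f g : pseries k R) : ptrunc N (padd f g) = ptrunc N f + ptrunc N g.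
Proof.
by apply/mpolyP => m; rewrite mcoeffD !mcoeff_ptrunc /padd; case: ifP; rewrite ?addr0.
Qed.

Lemma eq_ptrunc k N (f f' : pseries k R) : f =1 f' -> ptrunc N f = ptrunc N f'.
Proof. by move=> ff'; apply/mpolyP => m; rewrite !mcoeff_ptrunc ff'. Qed.

Lemma agree_ptrunc k d N (f : pseries k R) : (d <= N)%N -> agree d (ptrunc d f) (ptrunc N f).
Proof.
by move=> dN; apply: agreeP => m hm; rewrite !mcoeff_ptrunc hm (leq_trans hm dN).
Qed.

Lemma vanish_below1_ptrunc k N (f : pseries k R) :
  f 0%MM = 0 -> vanish_below 1 (ptrunc N f).
Proof.
move=> f0 m; rewrite ltnS leqn0 mdeg_eq0 => /eqP ->.
by rewrite mcoeff_ptrunc mdeg0 leq0n.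
Qed.

Lemma ptrunc_var k N (i : 'I_k) : (0 < N)%N -> ptrunc N (pvar R i) = 'X_i.
Proof.
move=> N_gt0; apply/mpolyP => m; rewrite mcoeff_ptrunc mcoeffX /pvar eq_sym.
by case: ifP => // hm; case: eqP => // mE; move: hm; rewrite -mE mdeg1 N_gt0.
Qed.

Lemma ptrunc_powS k N e (f : pseries k R) m :
  f 0%MM = 0 -> (1 < e)%N -> (mdeg m <= N.+1)%N ->
  (ptrunc N.+1 f ^+ e)@_m = (ptrunc N f ^+ e)@_m.
Proof.
move=> f0 e_gt1 hm; apply/eqP; rewrite -subr_eq0 -mcoeffB; apply/eqP.
have diff : vanish_below N.+1 (ptrunc N.+1 f - ptrunc N f).
  by move=> m' /ltnSE hm'; rewrite mcoeffB !mcoeff_ptrunc hm' (leqW hm') subrr.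
have := vanish_below_subXX (e := e) (vanish_below1_ptrunc _ f0) (vanish_below1_ptrunc _ f0) diff.
by apply; lia.
Qed.

Lemma deg_cong_ptrunc k M r N (f : pseries k R) :
  (forall m, (mdeg m <= N)%N -> f m != 0 -> mdeg m = r %[mod M]) ->
  deg_cong M r (ptrunc N f).
Proof. by move=> h m; rewrite mcoeff_ptrunc; case: ifP => [/h|]; rewrite ?eqxx. Qed.

End Truncation.

Section Composition.
Variable R : comNzRingType.

Lemma vanish_below_comp n k b a (q : n.-tuple {mpoly R[k]}) (P : {mpoly R[n]}) :
  (forall i, vanish_below b (tnth q i)) -> vanish_below a P ->
  vanish_below (a * b) (comp_mpoly q P).
Proof.
move=> hq hP; rewrite comp_mpolyE; apply: vanish_below_sum => m.
have [m_lt|m_ge] := ltnP (mdeg m) a; first by rewrite hP // scale0r; apply: vanish_below0.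
apply/vanish_belowZ/(@vanish_belowW _ _ (\sum_i (b * m i))%N).
  by rewrite -big_distrr /= -mdegE mulnC leq_mul.
by apply: vanish_below_prod => i; apply: vanish_belowX.
Qed.

Lemma agree_comp n k N (q q' : n.-tuple {mpoly R[k]}) (P P' : {mpoly R[n]}) :
  (forall i, vanish_below 1 (tnth q i)) -> (forall i, agree N (tnth q i) (tnth q' i)) ->
  agree N P P' -> agree N (comp_mpoly q P) (comp_mpoly q' P').
Proof.
move=> hq qq' PP'; apply: (@agree_trans _ _ _ _ (comp_mpoly q P')).
  by rewrite /agree -comp_mpolyB -[N.+1]muln1; apply: vanish_below_comp.
rewrite !comp_mpolyE; apply: agree_sum => m; apply: agreeZ.
by apply: agree_prod => i; apply: agreeX.
Qed.

Lemma comp_mpolyA n k j (lq : k.-tuple {mpoly R[j]}) (lp : n.-tuple {mpoly R[k]})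
    (P : {mpoly R[n]}) :
  comp_mpoly lq (comp_mpoly lp P) = comp_mpoly [tuple comp_mpoly lq (tnth lp i) | i < n] P.
Proof.
rewrite [comp_mpoly lp P]comp_mpolyE raddf_sum [RHS]comp_mpolyE /=.
apply: eq_bigr => m _; rewrite comp_mpolyZ rmorph_prod; congr (_ *: _).
by apply: eq_bigr => i _; rewrite rmorphXn tnth_mktuple.
Qed.

Lemma pcompE j k (f : pseries j R) (g : 'I_j -> pseries k R) m :
  pcomp f g m = (comp_mpoly [tuple ptrunc (mdeg m) (g i) | i < j] (ptrunc (mdeg m) f))@_m.
Proof. by []. Qed.

Lemma pcomp_ptrunc j k (f : pseries j R) (g : 'I_j -> pseries k R) m N :
  (forall i, g i 0%MM = 0) -> (mdeg m <= N)%N ->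
  pcomp f g m = (comp_mpoly [tuple ptrunc N (g i) | i < j] (ptrunc N f))@_m.
Proof.
move=> g0 hm; apply: (agree_coef (N := mdeg m)) => //; apply: agree_comp.
- by move=> i; rewrite tnth_mktuple; apply: vanish_below1_ptrunc.
- by move=> i; rewrite !tnth_mktuple; apply: agree_ptrunc.
- exact: agree_ptrunc.
Qed.

Lemma pcomp0 j k (f : pseries j R) (g : 'I_j -> pseries k R) : pcomp f g 0%MM = f 0%MM.
Proof. by rewrite /pcomp mdeg0 ptrunc0 comp_mpolyC mcoeffC eqxx mulr1. Qed.

Lemma eq_pcomp j k (f f' : pseries j R) (g g' : 'I_j -> pseries k R) :
  f =1 f' -> (forall i, g i =1 g' i) -> pcomp f g =1 pcomp f' g'.
Proof.
move=> ff' gg' m; rewrite /pcomp (eq_ptrunc _ ff'); congr (_ @_ _); congr comp_mpoly.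
by apply: eq_mktuple => i; apply: eq_ptrunc.
Qed.

Lemma pcompA j k l (f : pseries j R) (g : 'I_j -> pseries k R) (h : 'I_k -> pseries l R) :
  (forall i, g i 0%MM = 0) -> (forall i, h i 0%MM = 0) ->
  pcomp f (fun i => pcomp (g i) h) =1 pcomp (pcomp f g) h.
Proof.
move=> g0 h0 m; rewrite [LHS]pcompE [RHS]pcompE; set d := mdeg m.
set H := [tuple ptrunc d (h i) | i < k]; set G := [tuple ptrunc d (g i) | i < j].
have H1 i : vanish_below 1 (tnth H i) by rewrite tnth_mktuple; apply: vanish_below1_ptrunc.
apply: (agree_coef (N := d)) => //.
apply: (@agree_trans _ _ _ _ (comp_mpoly [tuple comp_mpoly H (tnth G i) | i < j] (ptrunc d f))).
  apply: agree_comp; last exact: agree_refl.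
    by move=> i; rewrite tnth_mktuple; apply: vanish_below1_ptrunc; rewrite pcomp0.
  move=> i; rewrite !tnth_mktuple; apply: agreeP => m' hm'.
  by rewrite mcoeff_ptrunc hm' (pcomp_ptrunc _ h0 hm').
rewrite -comp_mpolyA; apply: agree_comp => // [i|]; first exact: agree_refl.
by apply: agreeP => m' hm'; rewrite mcoeff_ptrunc hm' (pcomp_ptrunc _ g0 hm').
Qed.

Lemma pcomp_var j k (i : 'I_j) (g : 'I_j -> pseries k R) :
  g i 0%MM = 0 -> pcomp (pvar R i) g =1 g i.
Proof.
move=> g0 m; have [/eqP|m_gt0] := posnP (mdeg m).
  by rewrite mdeg_eq0 => /eqP ->; rewrite pcomp0 g0 /pvar eq_sym mnm1_eq0.
rewrite /pcomp ptrunc_var // comp_mpolyXU -tnth_nth tnth_mktuple.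
by rewrite mcoeff_ptrunc leqnn.
Qed.

Lemma pcomp_vars j (f : pseries j R) : pcomp f (fun i => pvar R i) =1 f.
Proof.
move=> m; have [/eqP|m_gt0] := posnP (mdeg m).
  by rewrite mdeg_eq0 => /eqP ->; rewrite pcomp0.
rewrite /pcomp (_ : [tuple _ | i < j] = [tuple 'X_i | i < j]).
  by rewrite comp_mpoly_id mcoeff_ptrunc leqnn.
by apply: eq_mktuple => i; apply: ptrunc_var.
Qed.

Lemma pcompDl j k (f f' : pseries j R) (g : 'I_j -> pseries k R) :
  pcomp (padd f f') g =1 padd (pcomp f g) (pcomp f' g).
Proof. by move=> m; rewrite /pcomp /padd ptruncD comp_mpolyD mcoeffD. Qed.

Lemma pcomp_zero j (f : pseries 1 R) :
  f 0%MM = 0 -> pcomp f (fun _ => pzero R j) =1 pzero R j.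
Proof.
move=> f0 m; rewrite pcompE /pzero.
have := @vanish_below_comp 1 j (mdeg m).+1 1 [tuple ptrunc (mdeg m) (pzero R j) | i < 1]
  (ptrunc (mdeg m) f).
rewrite mul1n; apply=> //; last exact: vanish_below1_ptrunc.
by move=> i m' _; rewrite tnth_mktuple mcoeff_ptrunc /pzero; case: ifP.
Qed.

End Composition.

Lemma map_comp_mpoly (A K : comNzRingType) (iota : {rmorphism A -> K}) n k
    (lq : n.-tuple {mpoly A[k]}) (P : {mpoly A[n]}) :
  map_mpoly iota (comp_mpoly lq P) =
  comp_mpoly [tuple map_mpoly iota (tnth lq i) | i < n] (map_mpoly iota P).
Proof.
rewrite comp_mpolyE raddf_sum /= [P in RHS]mpolyE [map_mpoly iota (\sum_(_ <- _) _)]raddf_sum.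
rewrite [comp_mpoly _ (\sum_(_ <- _) _)]raddf_sum; apply: eq_bigr => m _ /=.
rewrite !map_mpolyZ map_mpolyX comp_mpolyZ comp_mpolyX rmorph_prod /=; congr (_ *: _).
by apply: eq_bigr => i _; rewrite rmorphXn tnth_mktuple.
Qed.

Lemma ptrunc_pmap (A K : comNzRingType) (iota : {rmorphism A -> K}) k N (f : pseries k A) :
  ptrunc N (pmap iota f) = map_mpoly iota (ptrunc N f).
Proof.
apply/mpolyP => m; rewrite mcoeff_map_mpoly !mcoeff_ptrunc /pmap.
by case: ifP; rewrite ?raddf0.
Qed.

Lemma pmap_pcomp (A K : comNzRingType) (iota : {rmorphism A -> K}) j k
    (f : pseries j A) (g : 'I_j -> pseries k A) :
  pmap iota (pcomp f g) =1 pcomp (pmap iota f) (fun i => pmap iota (g i)).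
Proof.
move=> m; rewrite !pcompE {1}/pmap -mcoeff_map_mpoly map_comp_mpoly ptrunc_pmap.
congr (_ @_ _); congr comp_mpoly; apply: eq_mktuple => i.
by rewrite tnth_mktuple ptrunc_pmap.
Qed.

Definition mono (e : nat) : 'X_{1..1} := (U_(ord0) *+ e)%MM.

Lemma mdeg_mono e : mdeg (mono e) = e.
Proof. by rewrite /mono mdegMn mdeg1 mul1n. Qed.

Lemma mono_ord0 e : mono e ord0 = e.
Proof. by rewrite /mono mulmnE mnm1E eqxx mul1n. Qed.

Lemma mdeg1_inj : injective (@mdeg 1).
Proof. by move=> m1 m2; rewrite !mdegE !big_ord1 => mE; apply/mnmP => i; rewrite (ord1 i). Qed.

Lemma mono_mdeg (m : 'X_{1..1}) : m = mono (mdeg m).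
Proof. by apply: mdeg1_inj; rewrite mdeg_mono. Qed.

Lemma mono0 : mono 0 = 0%MM.
Proof. exact: mulm0n. Qed.

Lemma mono1 : mono 1 = U_(ord0)%MM.
Proof. exact: mulm1n. Qed.

Section OneVariable.
Variable R : comNzRingType.

Lemma pcomp1E k (h : pseries 1 R) (f : pseries k R) m :
  pcomp h (fun _ => f) m =
  \sum_(e < (mdeg m).+1) h (mono e) * ((ptrunc (mdeg m) f) ^+ e)@_m.
Proof.
rewrite pcompE; set d := mdeg m.
rewrite [ptrunc d h]/ptrunc [comp_mpoly _ _]raddf_sum [mcoeff _ _]raddf_sum /=.
under eq_bigr => m' _ do rewrite comp_mpolyZ comp_mpolyX big_ord1 tnth_mktuple mcoeffZ.
have mono_lt (e : 'I_d.+1) : (mdeg (mono e) < d.+1)%N by rewrite mdeg_mono.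
rewrite (reindex (fun e => BMultinom (mono_lt e))) /=.
  by apply: eq_bigr => e _; rewrite mono_ord0.
exists (fun m' : 'X_{1..1 < d.+1} => Ordinal (bmdeg m')) => [e _|m' _].
  by apply: val_inj; rewrite /= mdeg_mono.
by apply: val_inj; rewrite /= -mono_mdeg.
Qed.

Lemma ptrunc_pow_top (f : pseries 1 R) c d :
  f 0%MM = 0 -> f U_(ord0)%MM = c -> (ptrunc d f ^+ d)@_(mono d) = c ^+ d.
Proof.
move=> f0 f1; set T := ptrunc d f.
have [->|d_gt0] := posnP d; first by rewrite !expr0 mono0 mcoeff1 eqxx.
have linear_part : vanish_below 2 (T - c *: 'X_ord0).
  move=> m; rewrite mcoeffB mcoeffZ mcoeffX mcoeff_ptrunc (mono_mdeg m) mdeg_mono.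
  case: (mdeg m) => [|[|e]] // _; first by rewrite mono0 f0 mnm1_eq0 ?if_same mulr0 subr0.
  by rewrite mono1 d_gt0 f1 eqxx mulr1 subrr.
have cX1 : vanish_below 1 (c *: 'X_ord0 : {mpoly R[1]}).
  by apply: vanish_belowZ => m; rewrite ltnS leqn0 mdeg_eq0 => /eqP ->; rewrite mcoeffX mnm1_eq0.
have := vanish_below_subXX (e := d) (vanish_below1_ptrunc _ f0) cX1 linear_part.
move/(_ (mono d)); rewrite mdeg_mono mcoeffB => /(_ _)/eqP; rewrite subr_eq0 => /(_ _)/eqP ->.
  by rewrite exprZn mcoeffZ mpolyXn mcoeffX eqxx mulr1.
lia.
Qed.

End OneVariable.

Definition linearizes (R : nzRingType) (c : nat) (f l : pseries 1 R) : Prop :=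
  forall m, pcomp l (fun _ => f) m = l m *+ c.

Section Linearization.
Variables (K : comUnitRingType) (c : nat) (f : pseries 1 K).
Hypotheses (f0 : f 0%MM = 0) (f1 : f U_(ord0)%MM = c%:R).

Lemma linearizes_coef l d : linearizes c f l ->
  l (mono d) * (c%:R ^+ d - c%:R) = - \sum_(e < d) l (mono e) * (ptrunc d f ^+ e)@_(mono d).
Proof.
move=> lin; have := lin (mono d); rewrite pcomp1E mdeg_mono big_ord_recr /=.
rewrite (ptrunc_pow_top d f0 f1) => E.
by rewrite mulrBr mulr_natr -E opprD addrCA subrr addr0.
Qed.

Hypotheses (c_gt1 : (1 < c)%N) (nat_unit : forall k, (0 < k)%N -> (k%:R : K) \is a GRing.unit).

Lemma pow_sub_unit d : (1 < d)%N -> (c%:R ^+ d - c%:R : K) \is a GRing.unit.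
Proof.
move=> d_gt1; have c_le : (c <= c ^ d)%N by rewrite -{1}(expn1 c) leq_exp2l //; lia.
rewrite -natrX -natrB // nat_unit // subn_gt0 -{1}(expn1 c) ltn_exp2l //.
Qed.

Lemma linearizes_unique l l' : linearizes c f l -> linearizes c f l' ->
  l 0%MM = 0 -> l' 0%MM = 0 -> l U_(ord0)%MM = 1 -> l' U_(ord0)%MM = 1 -> l =1 l'.
Proof.
move=> lin lin' l0 l'0 l1 l'1 m; rewrite (mono_mdeg m); elim/ltn_ind: (mdeg m) => d IH.
case: (ltngtP d 1) => [|d_gt1|->]; last by rewrite mono1 l1 l'1.
  by rewrite ltnS leqn0 => /eqP ->; rewrite mono0 l0 l'0.
apply: (mulIr (pow_sub_unit d_gt1)); rewrite !linearizes_coef //; congr (- _).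
by apply: eq_bigr => e _; rewrite IH.
Qed.

Lemma cong1_supported_log l M : linearizes c f l -> l 0%MM = 0 ->
  cong1_supported M f -> cong1_supported M l.
Proof.
move=> lin l0 fM m; rewrite (mono_mdeg m) mdeg_mono; elim/ltn_ind: (mdeg m) => d IH ld.
have [//|dM] := eqVneq (d %% M)%N (1 %% M)%N.
suff ld0 : l (mono d) = 0 by rewrite ld0 eqxx in ld.
case: (ltngtP d 1) => [|d_gt1|d1]; last by rewrite d1 eqxx in dM.
  by rewrite ltnS leqn0 => /eqP ->; rewrite mono0.
apply: (mulIr (pow_sub_unit d_gt1)); rewrite mul0r linearizes_coef // big1 ?oppr0 // => e _.
have [->|/IH e1] := eqVneq (l (mono e)) 0; first by rewrite mul0r.
rewrite (deg_cong1_pow_coef _ (e1 (ltn_ord e))) ?mulr0 ?mdeg_mono //.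
by apply: deg_cong_ptrunc => m' _; apply: fM.
Qed.

Lemma cong1_supported_endo l M : linearizes c f l -> l 0%MM = 0 -> l U_(ord0)%MM = 1 ->
  cong1_supported M l -> cong1_supported M f.
Proof.
move=> lin l0 l1 lM m; rewrite (mono_mdeg m) mdeg_mono; elim/ltn_ind: (mdeg m) => d IH fd.
have [//|dM] := eqVneq (d %% M)%N (1 %% M)%N.
suff fd0 : f (mono d) = 0 by rewrite fd0 eqxx in fd.
case: d IH fd dM => [|d] IH _ dM; first by rewrite mono0.
have ld0 : l (mono d.+1) = 0.
  by apply: contraNeq dM => /lM; rewrite mdeg_mono => ->.
have := lin (mono d.+1); rewrite ld0 mul0rn pcomp1E mdeg_mono !big_ord_recl /=.
rewrite mono0 mono1 l0 l1 mul0r add0r mul1r expr1 mcoeff_ptrunc mdeg_mono leqnn.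
rewrite big1 ?addr0 // => e _.
have [->|/lM e1] := eqVneq (l (mono e.+2)) 0; first by rewrite mul0r.
rewrite ptrunc_powS ?mdeg_mono //.
rewrite mdeg_mono in e1; rewrite (deg_cong1_pow_coef _ e1) ?mulr0 ?mdeg_mono //.
apply: deg_cong_ptrunc => m' m'_le fm'; rewrite (mono_mdeg m') in fm' *.
by rewrite mdeg_mono; apply: IH.
Qed.

Lemma cong1_supported_logE l M : linearizes c f l -> l 0%MM = 0 -> l U_(ord0)%MM = 1 ->
  cong1_supported M l <-> cong1_supported M f.
Proof.
by move=> lin l0 l1; split; [apply: cong1_supported_endo | apply: cong1_supported_log].
Qed.

End Linearization.

Section FormalGroupLaw.
Variable A : comNzRingType.

Lemma ptrunc1 k (f : pseries k A) : f 0%MM = 0 ->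
  ptrunc 1 f = \sum_i f U_(i)%MM *: 'X_i.
Proof.
move=> f0; apply/mpolyP => m; rewrite mcoeff_ptrunc raddf_sum /=.
under eq_bigr => i _ do rewrite mcoeffZ mcoeffX.
case: (ltngtP (mdeg m) 1) => [|m_gt1|/eqP/mdeg1P[i /eqP ->]].
- rewrite ltnS leqn0 mdeg_eq0 => /eqP ->; rewrite f0 /=.
  by rewrite big1 // => i _; rewrite mnm1_eq0 mulr0.
- rewrite big1 // => i _; case: eqP => [mE|]; last by rewrite mulr0.
  by move: m_gt1; rewrite -mE mdeg1.
- rewrite (bigD1 i) //= eqxx mulr1 big1 ?addr0 // => i' i'i.
  by rewrite eq_mnm1 (negbTE i'i) mulr0.
Qed.

Lemma pcomp_deg1 j k (f : pseries j A) (g : 'I_j -> pseries k A) m :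
  f 0%MM = 0 -> (forall i, g i 0%MM = 0) -> mdeg m = 1%N ->
  pcomp f g m = \sum_i f U_(i)%MM * g i m.
Proof.
move=> f0 g0 m1; rewrite pcompE m1 ptrunc1 // [comp_mpoly _ _]raddf_sum [mcoeff _ _]raddf_sum /=.
apply: eq_bigr => i _.
by rewrite comp_mpolyZ comp_mpolyXU -tnth_nth tnth_mktuple mcoeffZ mcoeff_ptrunc m1.
Qed.

Lemma pvar0 k (i : 'I_k) : pvar A i 0%MM = 0.
Proof. by rewrite /pvar eq_sym mnm1_eq0. Qed.

Lemma fgl0 (F : pseries 2 A) : is_fgl F -> F 0%MM = 0.
Proof.
by case=> F_x0 _ _ _; have := congr1 (fun h => h 0%MM) F_x0; rewrite /= pcomp0 pvar0.
Qed.

Lemma pair2_at0 (a b : pseries 1 A) : a 0%MM = 0 -> b 0%MM = 0 ->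
  forall i, pair2 a b i 0%MM = 0.
Proof. by move=> a0 b0 i; rewrite /pair2; case: ifP. Qed.

Lemma fgl_lin (F : pseries 2 A) : is_fgl F -> forall i : 'I_2, F U_(i)%MM = 1.
Proof.
move=> fglF; have F0 := fgl0 fglF; case: fglF => F_x0 F_0y _ _.
have := congr1 (fun h => h U_(ord0)%MM) F_x0.
have := congr1 (fun h => h U_(ord0)%MM) F_0y.
rewrite /= !pcomp_deg1 ?mdeg1 //; try by apply: pair2_at0; rewrite ?pvar0.
rewrite !big_ord_recl !big_ord0 /pair2 /= /pvar /pzero eqxx -[true%:R]/(1 : A).
rewrite !mulr1 !mulr0 !addr0 add0r.
move=> F_y F_x [[|[|//]] i_lt]; [rewrite -F_x | rewrite -F_y];
  by congr (F U_(_)%MM); apply: val_inj.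
Qed.

Lemma fgl_mul0 (F : pseries 2 A) m : is_fgl F -> fgl_mul F m 0%MM = 0.
Proof. by move=> fglF; case: m => [|m] //=; rewrite pcomp0 fgl0. Qed.

Lemma fgl_mulU (F : pseries 2 A) m : is_fgl F -> fgl_mul F m U_(ord0)%MM = m%:R.
Proof.
move=> fglF; elim: m => [|m IH] /=; first by rewrite /pzero.
rewrite pcomp_deg1 ?fgl0 ?mdeg1 //; last exact: pair2_at0 (pvar0 _) (fgl_mul0 _ _).
rewrite big_ord_recl big_ord1 /pair2 /= !fgl_lin // IH /pvar eqxx !mul1r.
by rewrite -natr1 addrC.
Qed.

End FormalGroupLaw.

Lemma fgl_log_mul (A K : comUnitRingType) (iota : {rmorphism A -> K}) (F : pseries 2 A)
    (l : pseries 1 K) (m : nat) :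
  is_fgl F -> is_fgl_log iota F l -> linearizes m (pmap iota (fgl_mul F m)) l.
Proof.
move=> fglF [l0 _ l_add]; elim: m => [|m IH] x /=.
  rewrite (@eq_pcomp _ _ _ _ l _ (fun _ => pzero K 1)) ?pcomp_zero // => i m'.
  by rewrite /pmap /pzero raddf0.
pose G i := pmap iota (pair2 (pvar A ord0) (fgl_mul F m) i).
have G0 i : G i 0%MM = 0 by rewrite /G /pmap pair2_at0 ?raddf0 ?pvar0 ?fgl_mul0.
have F0 : pmap iota F 0%MM = 0 by rewrite /pmap fgl0 // raddf0.
rewrite (@eq_pcomp _ _ _ _ l _ (fun _ => pcomp (pmap iota F) G)) //; last first.
  by move=> i m'; rewrite pmap_pcomp.
rewrite (pcompA _ (fun _ => F0) G0) l_add pcompDl.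
have l_var i : pcomp (pcomp l (fun _ => pvar K i)) G x = pcomp l (fun _ => G i) x.
  rewrite -(pcompA _ (fun _ => @pvar0 K _ i) G0).
  by apply: eq_pcomp => // _ m'; rewrite pcomp_var.
rewrite /padd !l_var /G /pair2 /=.
rewrite (@eq_pcomp _ _ _ _ l _ (fun i => pvar K i)) //; last first.
  by move=> i m'; rewrite (ord1 i) /pmap /pvar rmorph_nat.
by rewrite pcomp_vars IH mulrS.
Qed.

Unset Implicit Arguments.
Set Strict Implicit.

Theorem corollary3p1p6 (p n : nat) (A K : comUnitRingType)
    (iota : {rmorphism A -> K}) (F : pseries 2 A) (l : pseries 1 K) :
  prime p ->
  Zp_local_algebra p A ->
  torsion_free A ->
  is_rationalization iota ->
  is_fgl F ->
  is_fgl_log iota F l ->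
  (pn_typical iota p n F <->
   supported_in l (fun d => exists i : nat, d = (p ^ (n * i))%N)).
Proof.
move=> /prime_gt1 p_gt1 _ _ [nat_unit iota_inj _] fglF logl.
have [l0 l1 _] := logl.
pose f := pmap iota (fgl_mul F p).
have f0 : f 0%MM = 0 by rewrite /f /pmap fgl_mul0 // raddf0.
have f1 : f U_(ord0)%MM = p%:R by rewrite /f /pmap fgl_mulU // rmorph_nat.
have lin := fgl_log_mul p fglF logl.
have typicalE : p_typical iota p F <-> supported_in l (fun d => exists k, d = (p ^ k)%N).
  split=> [/(_ l logl) //|lp l' logl' m]; have [l'0 l'1 _] := logl'.
  rewrite -(linearizes_unique f0 f1 p_gt1 nat_unit lin (fgl_log_mul p fglF logl')) //.
  exact: lp.
have gradableE : pn_gradable p n (fgl_mul F p) <-> cong1_supported (p ^ n - 1) f.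
  rewrite /pn_gradable -(supported_in_pmap _ _ iota_inj).
  by apply: supported_in_iff f0 _ => d d_gt0; apply: iff_sym; apply: modn_eq1P.
rewrite /pn_typical typicalE gradableE -(cong1_supported_logE f0 f1 p_gt1 nat_unit _ lin l0 l1).
rewrite supported_inI; apply: supported_in_iff l0 _ => d _; exact: expn_cong1P.
Qed.
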